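(* Let $Z\subset\mathbb{R}^d$ be a zonotope with $v$ vertices and let $\mathcal{H}_Z$ denote the family of all homothets of $Z$. Then for every finite set $S\subset\mathbb{R}^d$ and every $\epsilon>0$ there is a set $W\subset\mathbb{R}^d$ with $|W|\le v/\epsilon$ such that $W\cap Z'\neq\emptyset$ for every $Z'\in\mathcal{H}_Z$ with $|Z'\cap S|\ge\epsilon|S|$.
   Context: A zonotope is a centrally symmetric convex polytope all of whose faces are centrally symmetric. A homothet of $Z$ is $\lambda Z+x$ with $\lambda>0$, $x\in\mathbb{R}^d$. *)

From HB Require Import structures.
From mathcomp Require Import all_boot all_order all_algebra.
From mathcomp Require Import boolp classical_sets reals.
Set Implicit Arguments. Unset Strict Implicit. Unset Printing Implicit Defensive.
Import Order.TTheory GRing.Theory Num.Theory.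
Local Open Scope ring_scope.
Local Open Scope classical_set_scope.

Definition dotv (R : realType) (d : nat) (u x : 'rV[R]_d) : R :=
  \sum_(i < d) u ord0 i * x ord0 i.

Definition conv_hull (R : realType) (d : nat) (p : seq 'rV[R]_d) : set 'rV[R]_d :=
  [set x | exists w : 'I_(size p) -> R,
     (forall i, 0 <= w i) /\ \sum_(i < size p) w i = 1 /\
     x = \sum_(i < size p) w i *: p`_i].

Definition is_polytope (R : realType) (d : nat) (P : set 'rV[R]_d) : Prop :=
  exists p : seq 'rV[R]_d, p != [::] /\ P = conv_hull p.

Definition centrally_symmetric (R : realType) (d : nat) (A : set 'rV[R]_d) : Prop :=
  exists c : 'rV[R]_d, forall x, A x <-> A (2%:R *: c - x).

(* (Nonempty) faces of a polytope P: intersections of P with a supporting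
   hyperplane {x | <u,x> = max_P <u,.>}; u = 0 gives P itself. *)
Definition is_face (R : realType) (d : nat) (P F : set 'rV[R]_d) : Prop :=
  exists u : 'rV[R]_d, F = [set x | P x /\ forall y, P y -> dotv u y <= dotv u x].

Definition is_vertex (R : realType) (d : nat) (P : set 'rV[R]_d) (x : 'rV[R]_d) : Prop :=
  is_face P [set x].

Definition is_zonotope (R : realType) (d : nat) (Z : set 'rV[R]_d) : Prop :=
  [/\ is_polytope Z, centrally_symmetric Z &
      forall F, is_face Z F -> centrally_symmetric F].

Definition homothet (R : realType) (d : nat) (Z : set 'rV[R]_d) (lam : R) (x : 'rV[R]_d)
  : set 'rV[R]_d := [set lam *: z + x | z in Z].

(* Greedy construction: pick a homothet Z0 = lam0 Z + x0 of minimal size among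
   those containing at least eps |S| points of S (it exists by compactness), put
   the points lam0 v + x0, v a vertex of Z, into W, delete the points of Z0 from
   S and repeat; each round removes at least eps |S| points.  The zonotope
   property enters through the fact that every point x of a face F of Z is the
   midpoint of a vertex of Z lying in F and another point of F: applied to Z
   itself, it shows that every homothet of size at least lam0 that meets Z0
   contains one of the points lam0 v + x0. *)

From HB Require Import structures.
From mathcomp Require Import all_boot all_order all_algebra.
From mathcomp Require Import boolp classical_sets reals topology normedtype.
From mathcomp Require Import ring lra.
Import Order.TTheory GRing.Theory Num.Theory.
Import numFieldTopology.Exports numFieldNormedType.Exports.
Local Open Scope ring_scope.
Local Open Scope classical_set_scope.
Set Implicit Arguments. Unset Strict Implicit. Unset Printing Implicit Defensive.

Lemma sub_in_count (T : eqType) (a b : pred T) (s : seq T) :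
  {in s, forall x, a x -> b x} -> (count a s <= count b s)%N.
Proof.
elim: s => //= x s IH ab; rewrite leq_add ?IH // => [|y ys]; last first.
  by apply: ab; rewrite in_cons ys orbT.
by case ax: (a x); rewrite // (ab x (mem_head _ _) ax).
Qed.

Lemma exists_max (R : realType) (I : finType) (i0 : I) (f : I -> R) :
  exists i, forall j, f j <= f i.
Proof. by case: (@arg_maxP _ _ I i0 predT f isT) => i _ fi; exists i => j; apply: fi. Qed.

Lemma exists_small (R : realType) (I : finType) (P : I -> R -> Prop) :
  (forall i, exists2 e, 0 < e & forall e', 0 < e' -> e' <= e -> P i e') ->
  exists2 e, 0 < e & forall i, P i e.
Proof.
move=> small; have /choice[E EP] : forall i, exists e : R,
    0 < e /\ forall e', 0 < e' -> e' <= e -> P i e'.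
  by move=> i; have [e e0 Pe] := small i; exists e.
have E0 i : 0 < E i by case: (EP i).
have min_gt0 : 0 < \big[Order.min/1]_i E i.
  by elim/big_ind: _ => // x y x0 y0; rewrite lt_min x0 y0.
exists (\big[Order.min/1]_i E i) => // i.
by apply: (proj2 (EP i)) => //; rewrite (bigD1 i) //= ge_min lexx.
Qed.

Lemma exists_pos_mul_lt (R : realType) (I : finType) (a b : I -> R) :
  exists2 e, 0 < e & forall i, 0 < b i -> e * a i < b i.
Proof.
apply: (exists_small (P := fun i e => 0 < b i -> e * a i < b i)) => i.
have [bi0|] := ltrP 0 (b i); last by exists 1 => // e _ _ /lt_le_trans/[apply]; rewrite ltxx.
have a1 : 0 < `|a i| + 1 by rewrite ltr_wpDl.
exists (b i / (`|a i| + 1)); first by rewrite divr_gt0.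
move=> e e0; rewrite ler_pdivlMr // => ebi _.
by apply: lt_le_trans ebi; rewrite ltr_pM2l // ltr_pwDr // ler_norm.
Qed.

Lemma nested_compact_cluster (R : realType) (T : topologicalType)
    (X : R -> set T) (B : set T) :
  (forall e, 0 < e -> X e !=set0) ->
  (forall e e', 0 < e' -> e' <= e -> X e' `<=` X e) ->
  compact B -> X 1 `<=` B ->
  exists2 y, B y & forall e N, 0 < e -> nbhs y N -> X e `&` N !=set0.
Proof.
move=> Xne Xsub cB X1B; pose F := filter_from [set e : R | 0 < e] X.
have FF : ProperFilter F.
  apply: filter_from_proper => [|e /Xne//]; apply: filter_from_filter.
    by exists 1; rewrite /= ltr01.
  move=> e1 e2 /= e1_gt0 e2_gt0; exists (Order.min e1 e2); first by rewrite /= lt_min e1_gt0.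
  by move=> y Xy; split; apply: Xsub Xy; rewrite ?lt_min ?e1_gt0 ?ge_min ?lexx ?orbT.
have [|y [By cly]] := cB F FF; first by exists 1; rewrite /= ?ltr01.
by exists y => // e N e0; apply: cly; exists e.
Qed.

Section InnerProduct.
Variables (R : realType) (n : nat).
Implicit Types (u v x y : 'rV[R]_n) (k : R).

Lemma dotvC u x : dotv u x = dotv x u.
Proof. by apply: eq_bigr => i _; rewrite mulrC. Qed.

Lemma dotvDr u x y : dotv u (x + y) = dotv u x + dotv u y.
Proof. by rewrite /dotv -big_split; apply: eq_bigr => i _; rewrite mxE mulrDr. Qed.

Lemma dotvZr u k x : dotv u (k *: x) = k * dotv u x.
Proof. by rewrite /dotv mulr_sumr; apply: eq_bigr => i _; rewrite mxE mulrCA. Qed.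

Lemma dotvBr u x y : dotv u (x - y) = dotv u x - dotv u y.
Proof. by rewrite dotvDr -scaleN1r dotvZr mulN1r. Qed.

Lemma dotv0r u : dotv u 0 = 0.
Proof. by rewrite -(scale0r 0) dotvZr mul0r. Qed.

Lemma dotvDl u v x : dotv (u + v) x = dotv u x + dotv v x.
Proof. by rewrite dotvC dotvDr !(dotvC x). Qed.

Lemma dotvZl k u x : dotv (k *: u) x = k * dotv u x.
Proof. by rewrite dotvC dotvZr dotvC. Qed.

Lemma dotvNl u x : dotv (- u) x = - dotv u x.
Proof. by rewrite -scaleN1r dotvZl mulN1r. Qed.

Lemma dotvBl u v x : dotv (u - v) x = dotv u x - dotv v x.
Proof. by rewrite dotvDl dotvNl. Qed.

Lemma dotv0l x : dotv 0 x = 0.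
Proof. by rewrite dotvC dotv0r. Qed.

Lemma dotv_sumr u m (F : 'I_m -> 'rV[R]_n) :
  dotv u (\sum_(i < m) F i) = \sum_(i < m) dotv u (F i).
Proof.
rewrite /dotv exchange_big; apply: eq_bigr => j _.
by rewrite summxE mulr_sumr.
Qed.

Lemma dotvv_ge0 x : 0 <= dotv x x.
Proof. by apply: sumr_ge0 => i _; rewrite -expr2 sqr_ge0. Qed.

Lemma dotvv_gt0 x : x != 0 -> 0 < dotv x x.
Proof.
move=> x0; rewrite lt_neqAle dotvv_ge0 andbT eq_sym; apply: contra x0.
rewrite psumr_eq0 => [/allP x2_0|i _]; last by rewrite -expr2 sqr_ge0.
apply/eqP/rowP => i; rewrite mxE; apply/eqP.
by rewrite -sqrf_eq0 expr2 (implyP (x2_0 i (mem_index_enum _))).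
Qed.

Lemma dotv_le_norm u x e : (forall i, `|x ord0 i| <= e) ->
  `|dotv u x| <= e * \sum_i `|u ord0 i|.
Proof.
move=> xe; rewrite /dotv mulr_sumr; apply: le_trans (ler_norm_sum _ _ _) _.
by apply: ler_sum => i _; rewrite normrM mulrC ler_wpM2r.
Qed.

Fixpoint lincomb (l : seq R) (A : seq 'rV[R]_n) : 'rV_n :=
  if (l, A) is (a :: l', v :: A') then a *: v + lincomb l' A' else 0.

Definition in_cone (A : seq 'rV[R]_n) b :=
  exists l, [/\ size l = size A, all (fun a => 0 <= a) l & b = lincomb l A].

Lemma lincombE l (A : seq 'rV[R]_n) : size l = size A ->
  lincomb l A = \sum_(i < size A) l`_i *: A`_i.
Proof.
elim: l A => [|a l IH] [|v A] //=; first by rewrite big_ord0.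
by case=> sl; rewrite big_ord_recl /= IH.
Qed.

Lemma lincombZ k l (A : seq 'rV[R]_n) :
  lincomb [seq k * a | a <- l] A = k *: lincomb l A.
Proof.
elim: l A => [|a l IH] [|v A] /=; rewrite ?scaler0 //.
by rewrite IH scalerDr scalerA.
Qed.

Lemma lincomb_eq0 l (A : seq 'rV[R]_n) : all (fun a => 0 <= a) l ->
  \sum_(a <- l) a = 0 -> lincomb l A = 0.
Proof.
elim: l A => [|a l IH] [|v A] //= /andP[a0 l0]; rewrite big_cons => s0.
have sl0 : 0 <= \sum_(b <- l) b by rewrite big_seq; apply: sumr_ge0 => b /(allP l0).
have a_0 : a = 0 by lra.
by rewrite a_0 scale0r add0r IH //; lra.
Qed.

Lemma convex_lincomb (P : set 'rV[R]_n) :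
  (forall x y t, P x -> P y -> 0 <= t <= 1 -> P (t *: x + (1 - t) *: y)) ->
  forall l (A : seq 'rV[R]_n), size l = size A -> (forall q, q \in A -> P q) ->
  all (fun a => 0 <= a) l -> \sum_(a <- l) a = 1 -> P (lincomb l A).
Proof.
move=> Pconvex l A; elim: A l => [|q A IH] [|a l] //=; rewrite ?big_nil ?big_cons.
  by move=> _ _ _ /esym/eqP; rewrite oner_eq0.
case=> sl PA /andP[a0 l0] sum1; have Pq : P q by apply: PA; rewrite mem_head.
set s := \sum_(b <- l) b in sum1.
have s0 : 0 <= s by rewrite /s big_seq; apply: sumr_ge0 => b /(allP l0).
have [s_0|s_neq0] := eqVneq s 0.
  by rewrite lincomb_eq0 // addr0 -[a]addr0 -s_0 sum1 scale1r.
have Pl : P (s^-1 *: lincomb l A).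
  rewrite -lincombZ; apply: IH; rewrite ?size_map //.
  - by move=> q' q'A; apply: PA; rewrite in_cons q'A orbT.
  - by apply/allP => _ /mapP[b /(allP l0) b0 ->]; rewrite mulr_ge0 // invr_ge0.
  - by rewrite big_map -mulr_sumr mulVf.
have a01 : 0 <= a <= 1 by rewrite a0 -sum1 lerDl.
have := Pconvex _ _ a Pq Pl a01.
have -> : 1 - a = s by rewrite -sum1; ring.
by rewrite scalerA mulfV // scale1r.
Qed.

Lemma lincomb_subr l (A : seq 'rV[R]_n) y : size l = size A ->
  lincomb l [seq q - y | q <- A] = lincomb l A - (\sum_(a <- l) a) *: y.
Proof.
elim: l A => [|a l IH] [|v A] //=; first by rewrite big_nil scale0r subr0.
by case=> sl; rewrite IH // big_cons; apply/rowP => i; rewrite !mxE; ring.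
Qed.

Lemma dotv_lincomb_le0 u l (A : seq 'rV[R]_n) :
  all (fun a => 0 <= a) l -> (forall v, v \in A -> dotv u v <= 0) ->
  dotv u (lincomb l A) <= 0.
Proof.
elim: l A => [|a l IH] [|v A] /=; rewrite ?dotv0r // => /andP[a0 l0] uA.
have uv := uA v (mem_head _ _); have : dotv u (lincomb l A) <= 0.
  by apply: IH => // w wA; apply: uA; rewrite in_cons wA orbT.
by rewrite dotvDr dotvZr; nra.
Qed.

Lemma lincomb_proj (al : R) u a l (A : seq 'rV[R]_n) :
  lincomb l [seq al *: v - dotv u v *: a | v <- A] =
  al *: lincomb l A - dotv u (lincomb l A) *: a.
Proof.
elim: l A => [|b l IH] [|v A] /=; rewrite ?dotv0r ?scaler0 ?scale0r ?subr0 //.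
by rewrite IH dotvDr dotvZr; apply/rowP => i; rewrite !mxE; ring.
Qed.

(* Induction on [size A]: if [b] is not in the cone of the tail [A] but some
   separating [u] has [<u,a> > 0], project everything along [a] and recurse. *)
Lemma farkas (A : seq 'rV[R]_n) b : in_cone A b \/
  exists u, (forall v, v \in A -> dotv u v <= 0) /\ 0 < dotv u b.
Proof.
move: {2}(size A) (erefl (size A)) => k; elim: k A b => [|k IH] [|a A] b //=.
  move=> _; have [->|b0] := eqVneq b 0; first by left; exists [::].
  by right; exists b; split => //; apply: dotvv_gt0.
case=> sA; have [[l [sl l0 ->]]|[u [uA ub]]] := IH A b sA.
  by left; exists (0 :: l); rewrite /= sl l0 lexx scale0r add0r.
have [ua|ua] := lerP (dotv u a) 0.
  by right; exists u; split => // v; rewrite in_cons => /predU1P[->|/uA].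
pose al := dotv u a; pose proj v := al *: v - dotv u v *: a.
have sA' : size [seq proj v | v <- A] = k by rewrite size_map.
have [[l [sl l0 ebl]]|[u' [uA' ub']]] := IH _ (proj b) sA'.
- left; rewrite size_map in sl; rewrite lincomb_proj in ebl.
  pose L := lincomb l A; have uL : dotv u L <= 0 by apply: dotv_lincomb_le0.
  exists (((dotv u b - dotv u L) / al) :: l); split => /=; first by rewrite sl.
    by rewrite l0 andbT divr_ge0 // ?subr_ge0 ?(ltW ua) //; lra.
  have al0 : al != 0 by rewrite gt_eqF.
  apply/rowP => i; have /rowP/(_ i) := ebl; rewrite !mxE -/L => ebli.
  apply: (mulfI al0); rewrite mulrDr mulrA mulrCA divff // mulr1; lra.
- right; exists (al *: u' - dotv u' a *: u); split.
    move=> v; rewrite in_cons => /predU1P[->|vA].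
      by rewrite dotvBl !dotvZl /al mulrC subrr.
    have := uA' (proj v) (map_f _ vA).
    by rewrite dotvBl !dotvZl dotvBr !dotvZr; lra.
  by move: ub'; rewrite dotvBl !dotvZl dotvBr !dotvZr; lra.
Qed.

End InnerProduct.

Section ConvexHull.
Variables (R : realType) (d : nat) (p : seq 'rV[R]_d).
Local Notation Z := (conv_hull p).
Local Notation N := (size p).
Implicit Types (c : 'I_N -> R) (u v w x y : 'rV[R]_d).

Lemma dotv_convex_comb v c :
  dotv v (\sum_(i < N) c i *: p`_i) = \sum_(i < N) c i * dotv v p`_i.
Proof. by rewrite dotv_sumr; apply: eq_bigr => i _; rewrite dotvZr. Qed.

Lemma convex_comb_dotv_le c v M : (forall i, 0 <= c i) -> \sum_i c i = 1 ->
  (forall i, 0 < c i -> dotv v p`_i <= M) ->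
  dotv v (\sum_(i < N) c i *: p`_i) <= M.
Proof.
move=> c0 c1 vM; rewrite dotv_convex_comb -[M]mul1r -c1 mulr_suml.
apply: ler_sum => i _; have [->|ci] := eqVneq (c i) 0; first by rewrite !mul0r.
by rewrite ler_wpM2l ?vM // lt_neqAle eq_sym ci c0.
Qed.

Lemma convex_comb_dotv_ge c v M : (forall i, 0 <= c i) -> \sum_i c i = 1 ->
  (forall i, 0 < c i -> M <= dotv v p`_i) ->
  M <= dotv v (\sum_(i < N) c i *: p`_i).
Proof.
move=> c0 c1 Mv; rewrite -lerN2 -dotvNl; apply: convex_comb_dotv_le => // i ci.
by rewrite dotvNl lerN2 Mv.
Qed.

Lemma convex_comb_dotv_eqP c v M : (forall i, 0 <= c i) -> \sum_i c i = 1 ->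
  (forall i, 0 < c i -> dotv v p`_i <= M) ->
  dotv v (\sum_(i < N) c i *: p`_i) = M <-> forall i, 0 < c i -> dotv v p`_i = M.
Proof.
move=> c0 c1 vM; split=> [|vE]; last first.
  apply/eqP; rewrite eq_le convex_comb_dotv_ge ?andbT // => [|i /vE -> //].
  by apply: convex_comb_dotv_le => // i /vE ->.
move=> vxM i ci; have : \sum_j c j * (M - dotv v p`_j) == 0.
  under eq_bigr do rewrite mulrBr.
  by rewrite sumrB -mulr_suml c1 mul1r -dotv_convex_comb vxM subrr.
rewrite psumr_eq0 => [/allP/(_ i (mem_index_enum _))|j _]; last first.
  have [->|cj] := eqVneq (c j) 0; first by rewrite mul0r.
  by rewrite mulr_ge0 // subr_ge0 vM // lt_neqAle eq_sym cj c0.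
by rewrite mulf_eq0 (gt_eqF ci) /= subr_eq0 => /eqP ->.
Qed.

Lemma conv_hull_nth (i : 'I_N) : Z p`_i.
Proof.
exists (fun j => (j == i)%:R); split; first by move=> j; case: (j == i).
split; first by rewrite (bigD1 i) //= eqxx big1 ?addr0 // => j /negbTE ->.
by rewrite (bigD1 i) //= eqxx scale1r big1 ?addr0 // => j /negbTE ->; rewrite scale0r.
Qed.

Lemma conv_hull_dotv_le x v M :
  Z x -> (forall i : 'I_N, dotv v p`_i <= M) -> dotv v x <= M.
Proof. by move=> [c [c0 [c1 ->]]] vM; apply: convex_comb_dotv_le. Qed.

Lemma conv_hull_convex x y t : Z x -> Z y -> 0 <= t <= 1 ->
  Z (t *: x + (1 - t) *: y).
Proof.
move=> [cx [cx0 [cx1 ->]]] [cy [cy0 [cy1 ->]]] /andP[t0 t1].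
exists (fun i => t * cx i + (1 - t) * cy i); split.
  by move=> i; rewrite addr_ge0 // mulr_ge0 // subr_ge0.
split; first by rewrite big_split /= -!mulr_sumr cx1 cy1; ring.
rewrite !scaler_sumr -big_split /=; apply: eq_bigr => i _.
by apply/rowP => j; rewrite !mxE; ring.
Qed.

Lemma conv_hull_coord_le z i : Z z -> `|z ord0 i| <= \sum_(j < N) `|p`_j ord0 i|.
Proof.
move=> [c [c0 [c1 ->]]]; rewrite summxE; apply: le_trans (ler_norm_sum _ _ _) _.
apply: ler_sum => j _; rewrite mxE normrM (ger0_norm (c0 j)) ler_piMl //.
by rewrite -c1 (bigD1 j) //= lerDl sumr_ge0.
Qed.

(* Lift each point to [(q, 1)]: a point in the cone of the lifts is [(z, 1)]
   exactly when [z] is a convex combination of [p]. *)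
Lemma lincomb_lift l : size l = N ->
  lincomb l [seq row_mx q (const_mx 1 : 'rV[R]_1) | q <- p] =
  row_mx (lincomb l p) (const_mx (\sum_(a <- l) a)).
Proof.
elim: l p => [|a l IH] [|q A] //=; first by rewrite big_nil row_mx0.
case=> sl; rewrite IH // big_cons scale_row_mx add_row_mx.
by congr row_mx; apply/rowP => i; rewrite !mxE mulr1.
Qed.

Lemma conv_hull_sep z : ~ Z z ->
  exists v M, (forall i : 'I_N, dotv v p`_i <= M) /\ M < dotv v z.
Proof.
move=> zNZ; pose lift (q : 'rV[R]_d) := row_mx q (const_mx 1 : 'rV[R]_1).
have [[l [sl l0 e]]|[u [uA ub]]] := farkas [seq lift q | q <- p] (lift z).
  rewrite size_map in sl; rewrite lincomb_lift // in e.
  case/eq_row_mx: e => zE /rowP/(_ 0); rewrite !mxE => l1; exfalso; apply: zNZ.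
  exists (fun i : 'I_N => l`_i); split.
    by move=> i; apply: (allP l0); rewrite mem_nth // sl.
  by rewrite l1 (big_nth 0) big_mkord sl zE lincombE.
have dotv_lift (w : 'rV[R]_(d + 1)) q :
    dotv (row_mx (lsubmx w) (rsubmx w)) (lift q) = dotv (lsubmx w) q + rsubmx w 0 0.
  rewrite /dotv /lift big_split_ord big_ord1 /= !row_mxEr !mxE mulr1.
  by congr (_ + _); apply: eq_bigr => i _; rewrite !row_mxEl.
rewrite -(hsubmxK u) in uA ub; exists (lsubmx u), (- rsubmx u 0 0); split.
  by move=> i; have := uA _ (map_f lift (mem_nth 0 (ltn_ord i))); rewrite dotv_lift; lra.
by move: ub; rewrite dotv_lift; lra.
Qed.

End ConvexHull.

Section Faces.
Variables (R : realType) (d : nat) (p : seq 'rV[R]_d).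
Local Notation Z := (conv_hull p).
Local Notation N := (size p).
Implicit Types (c : 'I_N -> R) (u v x y : 'rV[R]_d).

Definition face u : set 'rV[R]_d :=
  [set x | Z x /\ forall y, Z y -> dotv u y <= dotv u x].

Lemma faceP u x : face u x <-> Z x /\ forall i : 'I_N, dotv u p`_i <= dotv u x.
Proof.
split=> [[Zx ux]|[Zx ux]]; split=> //; first by move=> i; apply/ux/conv_hull_nth.
by move=> y Zy; exact: conv_hull_dotv_le Zy ux.
Qed.

Lemma face0 x : face 0 x <-> Z x.
Proof. by split=> [[]//|Zx]; split=> // y _; rewrite !dotv0l. Qed.

Lemma face_sub u : face u `<=` Z.
Proof. by move=> x []. Qed.

Lemma face_dotv_eq u x y : face u x -> face u y -> dotv u x = dotv u y.
Proof. by move=> [Zx ux] [Zy uy]; apply/eqP; rewrite eq_le ux ?uy. Qed.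

Lemma face_nth_max u (k : 'I_N) :
  (forall j : 'I_N, dotv u p`_j <= dotv u p`_k) -> face u p`_k.
Proof. by move=> uk; apply/faceP; split=> //; apply: conv_hull_nth. Qed.

Lemma face_convex u x y t : face u x -> face u y -> 0 <= t <= 1 ->
  face u (t *: x + (1 - t) *: y).
Proof.
move=> /faceP[Zx ux] /faceP[Zy uy] t01; apply/faceP; split.
  exact: conv_hull_convex.
move=> i; rewrite dotvDr !dotvZr; have := ux i; have := uy i.
by case/andP: t01 => t0 t1; nra.
Qed.

Lemma face_convex_combP u c : (forall i, 0 <= c i) -> \sum_i c i = 1 ->
  face u (\sum_(i < N) c i *: p`_i) <-> forall i, 0 < c i -> face u p`_i.
Proof.
move=> c0 c1; split=> [ux i ci|uc].
  have {}ux (j : 'I_N) : dotv u p`_j <= dotv u (\sum_(i < N) c i *: p`_i).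
    by case/faceP: ux => _; apply.
  apply: face_nth_max => j.
  by rewrite ((convex_comb_dotv_eqP c0 c1 (fun k _ => ux k)).1 erefl i ci).
apply/faceP; split; first by exists c.
move=> j; apply: convex_comb_dotv_ge => // i /uc /faceP[_]; apply.
Qed.

Lemma face_center u cen x : (forall y, face u y <-> face u (2%:R *: cen - y)) ->
  face u x -> face u cen.
Proof.
move=> sym ux; have := face_convex ux ((sym x).1 ux) (t := 2^-1).
rewrite invr_ge0 ler0n invf_le1 ?ler1n // => /(_ isT).
suff -> : 2^-1 *: x + (1 - 2^-1) *: (2%:R *: cen - x) = cen by [].
by apply/rowP => i; rewrite !mxE; field.
Qed.

Variable i0 : 'I_N.

(* The face of [face u] exposed by [u2] is exposed in [Z] by [u + e *: u2]
   for [e > 0] small enough. *)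
Lemma face_of_face u u2 : exists u3, forall x,
  face u3 x <-> face u x /\ forall y, face u y -> dotv u2 y <= dotv u2 x.
Proof.
have [k1 k1max] := exists_max i0 (fun j => dotv u p`_j).
pose h := dotv u p`_k1; have uk1 := face_nth_max k1max.
have tightP (j : 'I_N) : face u p`_j <-> dotv u p`_j = h.
  split=> [/face_dotv_eq/(_ uk1)//|ujh].
  by apply: face_nth_max => i; rewrite ujh; apply: k1max.
have [k2 /eqP k2tight k2max] := @arg_maxP _ _ _ k1
  [pred j : 'I_N | dotv u p`_j == h] (fun j => dotv u2 p`_j) (eqxx _).
pose g := dotv u2 p`_k2.
pose a (j : 'I_N) := dotv u2 p`_j - g; pose b (j : 'I_N) := h - dotv u p`_j.
have [e e0 e_small] := exists_pos_mul_lt a b.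
pose u3 := u + e *: u2.
have key (j : 'I_N) : dotv u3 p`_j <= h + e * g /\
    (dotv u3 p`_j = h + e * g <-> face u p`_j /\ dotv u2 p`_j = g).
  rewrite tightP dotvDl dotvZl; have [ujh|ujh] := eqVneq (dotv u p`_j) h.
    have /= := k2max j (introT eqP ujh); rewrite -/g ujh; split; first by nra.
    by split=> [?|[_ ->]] //; split=> //; apply: (mulfI (lt0r_neq0 e0)); lra.
  have ujh' : dotv u p`_j < h by rewrite lt_neqAle ujh k1max.
  have := e_small j; rewrite /a /b subr_gt0 => /(_ ujh') ?.
  by split; [|split=> [|[/eqP]]]; rewrite ?(negbTE ujh) //; lra.
have u3k2E : dotv u3 p`_k2 = h + e * g by apply/(key k2).2; rewrite tightP.
have u3k2 : face u3 p`_k2 by apply: face_nth_max => j; rewrite u3k2E; apply: (key j).1.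
have u2_le y : face u y -> dotv u2 y <= g.
  move=> uy; have [c [c0 [c1 yE]]] := face_sub uy; rewrite yE in uy *.
  apply: convex_comb_dotv_le => // i ci; apply: k2max; apply/eqP; rewrite -tightP.
  exact: (face_convex_combP _ c0 c1).1 uy i ci.
exists u3 => x; split=> [u3x|[ux u2x]].
  have [c [c0 [c1 xE]]] := face_sub u3x; rewrite xE in u3x *.
  have supp (i : 'I_N) : 0 < c i -> face u p`_i /\ dotv u2 p`_i = g.
    move=> ci; apply/(key i).2; rewrite -u3k2E; apply: face_dotv_eq u3k2.
    exact: (face_convex_combP _ c0 c1).1 u3x i ci.
  split; first by apply/face_convex_combP => // i /supp[].
  move=> y /u2_le; suff -> : dotv u2 (\sum_(i < N) c i *: p`_i) = g by [].
  apply/convex_comb_dotv_eqP => // [i /supp[_ ->]//|i /supp[]//].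
apply/faceP; split=> [|j]; first exact: face_sub ux.
apply: le_trans (proj1 (key j)) _.
rewrite dotvDl dotvZl (face_dotv_eq ux uk1) -/h lerD2l ler_wpM2l ?(ltW e0) //.
by apply: (u2x p`_k2); rewrite tightP.
Qed.

End Faces.

Section FaceBoundary.
Variables (R : realType) (d : nat) (p : seq 'rV[R]_d) (i0 : 'I_(size p)).
Local Notation Z := (conv_hull p).
Local Notation N := (size p).
Local Notation face := (face p).
Implicit Types (u v x y : 'rV[R]_d).

Lemma face_ray_end u c y : face u c -> face u y -> y != c ->
  exists2 T, 1 <= T & face u (c + T *: (y - c)) /\
    forall t, face u (c + t *: (y - c)) -> t <= T.
Proof.
move=> uc uy yc; set e := y - c; set S := [set t | face u (c + t *: e)].
have e_gt0 : 0 < dotv e e by rewrite dotvv_gt0 // subr_eq0.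
have S1 : S 1 by rewrite /S /= scale1r addrC subrK.
have [k kmax] := exists_max i0 (fun j => dotv e p`_j).
have S_ub : ubound S ((dotv e p`_k - dotv e c) / dotv e e).
  move=> t /face_sub/conv_hull_dotv_le/(_ kmax); rewrite ler_pdivlMr //.
  by rewrite dotvDr dotvZr; lra.
have S_sup : has_sup S by split; [exists 1 | eexists; exact: S_ub].
exists (sup S); first exact: sup_upper_bound.
split=> [|t St]; last exact: sup_upper_bound.
apply/faceP; split; last first.
  have ue : dotv u e = 0 by rewrite dotvBr (face_dotv_eq uy uc) subrr.
  by move=> i; rewrite dotvDr dotvZr ue mulr0 addr0; case/faceP: uc => _.
apply: contrapT => /conv_hull_sep[w [M [wM Mw]]].
have wS t : S t -> dotv w c + t * dotv w e <= M.
  by move=> /face_sub/conv_hull_dotv_le/(_ wM); rewrite dotvDr dotvZr.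
move: Mw; rewrite dotvDr dotvZr; have [we|we] := lerP (dotv w e) 0.
  have := wS 1 S1; have : 1 <= sup S by apply: sup_upper_bound.
  by nra.
have : sup S <= (M - dotv w c) / dotv w e.
  by apply: ge_sup; [exists 1 | move=> t /wS St; rewrite ler_pdivlMr //; lra].
by rewrite ler_pdivlMr //; lra.
Qed.

(* A far end [y] of a chord through [c] lies in a smaller face that misses [c]:
   otherwise Farkas puts [y - c] in the cone of the [q - y], [q] in the face,
   and the chord could be prolonged beyond [y]. *)
Lemma chord_end_subface u c y : face u c -> face u y -> y != c ->
    (forall t, face u (c + t *: (y - c)) -> t <= 1) ->
  exists u3, [/\ face u3 y, ~ face u3 c & forall x, face u3 x -> face u x].
Proof.
move=> uc uy yc ymax; set Q := [seq q <- p | `[< face u q >]].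
have uQ q : q \in Q -> face u q by rewrite mem_filter => /andP[/asboolP].
have [[l [sl l0 yE]]|[u2 [u2Q u2y]]] := farkas [seq q - y | q <- Q] (y - c).
  exfalso; rewrite size_map in sl; rewrite lincomb_subr // in yE.
  set L := \sum_(a <- l) a in yE.
  have L0 : 0 <= L by rewrite /L big_seq; apply: sumr_ge0 => a /(allP l0).
  have [L_0|L_neq0] := eqVneq L 0.
    by move: yc; rewrite -subr_eq0 yE L_0 scale0r subr0 lincomb_eq0 ?eqxx.
  have : face u (lincomb [seq L^-1 * a | a <- l] Q).
    apply: convex_lincomb; rewrite ?size_map //; first exact: face_convex.
      by apply/allP => _ /mapP[a /(allP l0) a0 ->]; rewrite mulr_ge0 ?invr_ge0.
    by rewrite big_map -mulr_sumr mulVf.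
  have -> : lincomb [seq L^-1 * a | a <- l] Q = c + (1 + L^-1) *: (y - c).
    have lQ : lincomb l Q = y - c + L *: y by rewrite yE subrK.
    by rewrite lincombZ lQ; apply/rowP => i; rewrite !mxE; field.
  have : 0 < L^-1 by rewrite invr_gt0 lt_neqAle eq_sym L_neq0 L0.
  by move=> L_gt0 /ymax; lra.
have [u3 u3E] := face_of_face i0 u u2; exists u3; split.
- apply/u3E; split=> // z uz; have [a [a0 [a1 zE]]] := face_sub uz.
  rewrite zE in uz *; apply: convex_comb_dotv_le => // i ai.
  have uai : face u p`_i by exact: (face_convex_combP _ a0 a1).1 uz i ai.
  have := u2Q (p`_i - y); rewrite dotvBr subr_le0; apply; apply: map_f.
  by rewrite mem_filter mem_nth // andbT; apply/asboolP.
- by move=> /u3E[_ /(_ y uy)]; move: u2y; rewrite dotvBr; lra.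
- by move=> x /u3E[].
Qed.

Definition face_size u := #|[set i : 'I_N | `[< face u p`_i >]]%SET|.

Lemma face_size_lt u u3 c : (forall x, face u3 x -> face u x) ->
  face u c -> ~ face u3 c -> (face_size u3 < face_size u)%N.
Proof.
move=> u3u uc u3c; apply/proper_card/properP; split.
  by apply/fintype.subsetP => i; rewrite !inE; apply: u3u.
apply: contrapT => all_u3; apply: u3c.
have [a [a0 [a1 cE]]] := face_sub uc; rewrite cE in uc *.
apply/face_convex_combP => // i ai; apply: contrapT => u3i; apply: all_u3.
have ui : face u p`_i by exact: (face_convex_combP _ a0 a1).1 uc i ai.
by exists i; rewrite !inE //; apply/asboolPn.
Qed.

End FaceBoundary.

Section VertexMidpoint.
Variables (R : realType) (d : nat) (p : seq 'rV[R]_d) (i0 : 'I_(size p)).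
Local Notation Z := (conv_hull p).
Local Notation face := (face p).
Hypothesis face_sym : forall u, centrally_symmetric (face u).
Implicit Types (u v x y : 'rV[R]_d).

Lemma face_singleton_vertex u c : face u c -> (forall y, face u y -> y = c) ->
  is_vertex Z c.
Proof.
by move=> uc u_c; exists u; apply/seteqP; split=> [y /= ->|y /u_c].
Qed.

Lemma face_chord_through u c x y0 : face u c -> face u x -> face u y0 -> y0 != c ->
  exists y rho, [/\ face u y, y != c, forall t, face u (c + t *: (y - c)) -> t <= 1,
    0 <= rho <= 1 & x = c + rho *: (y - c)].
Proof.
move=> uc ux uy0 y0c.
have [y1 [s [uy1 y1c s01 xE]]] : exists y1 s,
    [/\ face u y1, y1 != c, 0 <= s <= 1 & x = c + s *: (y1 - c)].
  have [->|xc] := eqVneq x c; first by exists y0, 0; rewrite lexx ler01 scale0r addr0.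
  by exists x, 1; rewrite lexx ler01 scale1r addrC subrK.
have [T T1 [uT Tmax]] := face_ray_end i0 uc uy1 y1c.
have T0 : 0 < T by lra.
exists (c + T *: (y1 - c)), (s / T); split => //.
- by rewrite -subr_eq0 addrAC subrr add0r scaler_eq0 subr_eq0 negb_or gt_eqF.
- move=> t; rewrite addrAC subrr add0r scalerA => /Tmax.
  by rewrite -[X in _ <= X]mul1r ler_pM2r.
- by rewrite divr_ge0 ?ler_pdivrMr ?(ltW T0) //=; lra.
- by rewrite addrAC subrr add0r scalerA divfK ?gt_eqF.
Qed.

(* Through the center
   [c] of the face, prolong the chord from [c] through [x] up to the boundary
   point [y]; [y] lies in a smaller face [G] with center [c3].  A vertex [v]
   given by induction for [rho y + (1 - rho) c3] in [G] also works for [x],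
   reflecting first through [c3] and then through [c]. *)
Lemma face_vertex_midpoint u x : face u x ->
  exists v, [/\ is_vertex Z v, face u v & face u (2%:R *: x - v)].
Proof.
move: {2}(face_size p u).+1 (ltnSn (face_size p u)) => k.
elim: k u x => [//|k IH] u x size_u ux.
have [c sym_c] := face_sym u; have uc := face_center sym_c ux.
have [[y0 [uy0 y0c]]|] := pselect (exists y, face u y /\ y != c); last first.
  move=> /forallNP single; have u_c y : face u y -> y = c.
    by move=> uy; apply/eqP; apply: contrapT => /negP yc; apply: (single y).
  exists c; split=> //; first exact: face_singleton_vertex uc u_c.
  by rewrite (u_c x ux) scaler_nat mulr2n addrK.
have [y [rho [uy yc ymax rho01 xE]]] := face_chord_through uc ux uy0 y0c.
have [u3 [u3y u3c u3u]] := chord_end_subface i0 uc uy yc ymax.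
have [c3 sym_c3] := face_sym u3; have u3c3 := face_center sym_c3 u3y.
have u3x' : face u3 (rho *: y + (1 - rho) *: c3) by apply: face_convex.
have size_u3 : (face_size p u3 < k)%N.
  by apply: leq_trans (face_size_lt u3u uc u3c) _; rewrite -ltnS.
have [v [Vv u3v u3g]] := IH u3 _ size_u3 u3x'.
set g := 2%:R *: _ - v in u3g.
exists v; split=> //; first exact: u3u.
have ug : face u g := u3u _ u3g.
have ug' : face u (2%:R *: c - (2%:R *: c3 - g)).
  exact: (sym_c _).1 (u3u _ ((sym_c3 g).1 u3g)).
have := face_convex ug' ug (t := 1 - rho); rewrite subr_ge0 lerBlDr lerDl.
case/andP: rho01 => -> -> /(_ isT); congr face.
by rewrite /g xE; apply/rowP => i; rewrite !mxE; ring.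
Qed.

End VertexMidpoint.

Section HomothetsMeet.
Variables (R : realType) (d : nat) (p : seq 'rV[R]_d) (i0 : 'I_(size p)).
Local Notation Z := (conv_hull p).
Hypothesis face_sym : forall u, centrally_symmetric (face p u).

Lemma conv_hull_midpoint_vertex x : Z x -> exists v, is_vertex Z v /\ Z (2%:R *: x - v).
Proof.
move/face0=> Zx; have [v [Vv _ /face0 Zv]] := face_vertex_midpoint i0 face_sym Zx.
by exists v.
Qed.

Lemma conv_hull_center : exists2 c, Z c & forall y, Z y -> Z (2%:R *: c - y).
Proof.
have [c sym_c] := face_sym 0; exists c; last by move=> y /face0/sym_c/face0.
by apply/face0/(face_center sym_c); apply/face0/conv_hull_nth.
Qed.

Lemma vertex_exists : exists v, is_vertex Z v.
Proof. by have [v [Vv _]] := conv_hull_midpoint_vertex (conv_hull_nth i0); exists v. Qed.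

(* With [a], [b] the points of [Z] at [w] and [mu = lam2 / lam1], the point
   [x] solves [lam1 *: x + x1 = lam2 *: (2c - x) + x2]; then for the vertex [v]
   of [conv_hull_midpoint_vertex x] we get [lam1 *: v + x1 = lam2 *: z + x2] with
   [z = 2c - x + mu^-1 *: (v - x)], a convex combination of reflections. *)
Lemma homothet_meet_vertex lam1 lam2 x1 x2 w : 0 < lam1 -> lam1 <= lam2 ->
    homothet Z lam1 x1 w -> homothet Z lam2 x2 w ->
  exists v, is_vertex Z v /\ homothet Z lam2 x2 (lam1 *: v + x1).
Proof.
move=> lam1_gt0 lam12 [a Za wE] [b Zb wE']; have [c _ Zrefl] := conv_hull_center.
set mu := lam2 / lam1; have mu1 : 1 <= mu by rewrite ler_pdivlMr // mul1r.
set x := (1 + mu)^-1 *: a + (1 - (1 + mu)^-1) *: (2%:R *: c - b).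
have Zx : Z x.
  apply: conv_hull_convex => //; first exact: Zrefl.
  by rewrite invr_ge0 invf_le1 ?ler_wpDr //; lra.
have [v [Vv Zr]] := conv_hull_midpoint_vertex Zx; exists v; split=> //.
set z := (1 - mu^-1) *: (2%:R *: c - x) +
          (1 - (1 - mu^-1)) *: (2%:R *: c - (2%:R *: x - v)).
have Zz : Z z.
  apply: conv_hull_convex; [exact: Zrefl | exact: Zrefl |].
  have : 0 < mu^-1 <= 1 by rewrite invr_gt0 invf_le1; lra.
  by case/andP=> ? ?; apply/andP; split; lra.
exists z => //; have -> : x1 = lam2 *: b + x2 - lam1 *: a by rewrite wE' -wE addrAC subrr add0r.
rewrite /z /x /mu; apply/rowP => i; rewrite !mxE; field.
by rewrite !gt_eqF //=; lra.
Qed.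

End HomothetsMeet.

Section HomothetSeparation.
Variables (R : realType) (d : nat) (p : seq 'rV[R]_d).
Local Notation Z := (conv_hull p).
Local Notation N := (size p).
Implicit Types (u v w x y s : 'rV[R]_d) (lam : R).

Lemma homothet_dotv_le lam x s w M : 0 <= lam -> homothet Z lam x s ->
  (forall i : 'I_N, dotv w p`_i <= M) -> dotv w (s - x) <= lam * M.
Proof.
move=> lam0 [z Zz <-] wM; rewrite addrK dotvZr ler_wpM2l //.
exact: conv_hull_dotv_le Zz wM.
Qed.

Lemma homothet_coord_le lam x s i : 0 <= lam -> homothet Z lam x s ->
  `|(s - x) ord0 i| <= lam * \sum_(j < N) `|p`_j ord0 i|.
Proof.
move=> lam0 [z Zz <-]; rewrite addrK mxE normrM ger0_norm // ler_wpM2l //.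
exact: conv_hull_coord_le.
Qed.

Variable i0 : 'I_N.

Lemma homothet_sep lam x s : 0 <= lam -> ~ homothet Z lam x s ->
  exists w M, (forall i : 'I_N, dotv w p`_i <= M) /\ lam * M < dotv w (s - x).
Proof.
move=> lam0 sNZ; have [lam_0|lam_neq0] := eqVneq lam 0.
  have sx : s - x != 0.
    rewrite subr_eq0; apply/eqP => sx; apply: sNZ.
    by exists p`_i0; [exact: conv_hull_nth | rewrite lam_0 scale0r add0r].
  have [k kmax] := exists_max i0 (fun j => dotv (s - x) p`_j).
  by exists (s - x), (dotv (s - x) p`_k); rewrite lam_0 mul0r dotvv_gt0.
have lam_gt0 : 0 < lam by rewrite lt_neqAle eq_sym lam_neq0.
have : ~ Z (lam^-1 *: (s - x)).
  move=> Zs; apply: sNZ; exists (lam^-1 *: (s - x)) => //.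
  by rewrite scalerA mulfV // scale1r subrK.
move=> /conv_hull_sep[w [M [wM Mw]]]; exists w, M; split => //.
by move: Mw; rewrite dotvZr -(ltr_pM2l lam_gt0) mulrA mulfV // mul1r.
Qed.

End HomothetSeparation.

Definition homothet_count (R : realType) (d : nat) (Z : set 'rV[R]_d)
  (S : seq 'rV[R]_d) (lam : R) (x : 'rV[R]_d) : nat :=
  count (fun s => s \in homothet Z lam x) S.

Lemma homothet0_count_le1 (R : realType) (d : nat) (Z : set 'rV[R]_d) S x :
  uniq S -> (homothet_count Z S 0 x <= 1)%N.
Proof.
move=> uS; apply: (@leq_trans (count_mem x S)).
  by apply: sub_count => s /set_mem[z _ <-]; rewrite scale0r add0r /=.
by rewrite count_uniq_mem //; case: (x \in S).
Qed.

(* [homothet Z lam (y - lam *: c)] is the homothet of size [lam] in which the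
   point [c] of [Z] sits at [y]. *)
Section CenteredHomothets.
Variables (R : realType) (d : nat) (p : seq 'rV[R]_d) (c : 'rV[R]_d).
Local Notation Z := (conv_hull p).
Local Notation N := (size p).
Hypothesis Zc : Z c.
Implicit Types (w x y s : 'rV[R]_d) (lam : R) (S : seq 'rV[R]_d).

Lemma homothet_centered_sub lam lam' y : 0 <= lam -> lam <= lam' -> 0 < lam' ->
  homothet Z lam (y - lam *: c) `<=` homothet Z lam' (y - lam' *: c).
Proof.
move=> lam0 lam_le lam'_gt0 _ [z Zz <-].
exists ((lam / lam') *: z + (1 - lam / lam') *: c).
  by apply: conv_hull_convex; rewrite // divr_ge0 ?ler_pdivrMr ?mul1r ?(ltW lam'_gt0).
by apply/rowP => i; rewrite !mxE; field; rewrite gt_eqF.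
Qed.

Lemma homothet_count_centered_le S lam lam' y : 0 <= lam -> lam <= lam' -> 0 < lam' ->
  (homothet_count Z S lam (y - lam *: c) <= homothet_count Z S lam' (y - lam' *: c))%N.
Proof.
move=> lam0 lam_le lam'_gt0; apply: sub_count => s /set_mem Hs.
exact/mem_set/(homothet_centered_sub lam0 lam_le lam'_gt0).
Qed.

Lemma homothet_centered_bounded lam y s i : 0 <= lam ->
  homothet Z lam (y - lam *: c) s ->
  `|y ord0 i| <= `|s ord0 i| + lam * (\sum_(j < N) `|p`_j ord0 i| + `|c ord0 i|).
Proof.
move=> lam0 /(homothet_coord_le i lam0); rewrite !mxE mulrDr => sy.
have -> : y ord0 i =
    s ord0 i - (s ord0 i - (y ord0 i - lam * c ord0 i)) + lam * c ord0 i by ring.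
apply: le_trans (ler_normD _ _) _; apply: le_trans (lerD (ler_normB _ _) (lexx _)) _.
by rewrite normrM (ger0_norm lam0) -addrA lerD2l lerD2r.
Qed.

Lemma homothet_count_gt0_bounded S lam y i : 0 <= lam ->
    (0 < homothet_count Z S lam (y - lam *: c))%N ->
  `|y ord0 i| <= \sum_(t <- S) `|t ord0 i| +
                 lam * (\sum_(j < N) `|p`_j ord0 i| + `|c ord0 i|).
Proof.
move=> lam0; rewrite -has_count => /hasP[s sS /set_mem/homothet_centered_bounded].
move=> /(_ i lam0) /le_trans; apply; rewrite lerD2r (big_rem _ sS) /= lerDl.
exact: sumr_ge0.
Qed.

Lemma homothet_count_gt0_compact S lam : 0 <= lam -> exists2 B, compact B &
  forall y, (0 < homothet_count Z S lam (y - lam *: c))%N -> B y.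
Proof.
move=> lam0; pose K i := \sum_(t <- S) `|t ord0 i| +
  lam * (\sum_(j < N) `|p`_j ord0 i| + `|c ord0 i|).
exists [set y : 'rV[R]_d | forall i, `[- K i, K i]%classic (y ord0 i)].
  by apply: (@rV_compact _ _ (fun i => `[- K i, K i]%classic)) => i;
     apply: segment_compact.
move=> y heavy i; rewrite /= in_itv /= -ler_norml.
exact: homothet_count_gt0_bounded.
Qed.

Variable i0 : 'I_N.

Lemma notin_homothet_near l0 y0 s : 0 <= l0 -> ~ homothet Z l0 (y0 - l0 *: c) s ->
  exists2 e, 0 < e & forall e', 0 < e' -> e' <= e -> forall y,
    (forall i, `|y0 ord0 i - y ord0 i| < e') ->
    ~ homothet Z (l0 + e') (y - (l0 + e') *: c) s.
Proof.
move=> l0_ge0 /(homothet_sep i0 l0_ge0)[w [M [wM Mw]]].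
set g := dotv w (s - (y0 - l0 *: c)) - l0 * M; have g_gt0 : 0 < g by rewrite subr_gt0.
set W := \sum_i `|w ord0 i|; have W0 : 0 <= W by apply: sumr_ge0.
have K_gt0 : 0 < W + `|dotv w c - M| + 1 by rewrite ltr_wpDl // addr_ge0.
exists (g / (W + `|dotv w c - M| + 1)); first by rewrite divr_gt0.
move=> e e0 e_le y ye hin; rewrite ler_pdivlMr // in e_le.
have /ler_normlP[wy _] : `|dotv w (y0 - y)| <= e * W.
  by apply: dotv_le_norm => i; rewrite !mxE ltW.
have wc := ler_norm (M - dotv w c); rewrite distrC in wc.
have := homothet_dotv_le (addr_ge0 l0_ge0 (ltW e0)) hin wM.
have -> : dotv w (s - (y - (l0 + e) *: c)) =
    g + l0 * M + dotv w (y0 - y) + e * dotv w c.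
  by rewrite /g !dotvBr !dotvZr; ring.
by nra.
Qed.

Lemma homothet_count_near S l0 y0 : 0 <= l0 -> exists2 e, 0 < e & forall y,
  (forall i, `|y0 ord0 i - y ord0 i| < e) ->
  (homothet_count Z S (l0 + e) (y - (l0 + e) *: c) <=
   homothet_count Z S l0 (y0 - l0 *: c))%N.
Proof.
move=> l0_ge0; pose P (j : 'I_(size S)) e := forall y,
  (forall i, `|y0 ord0 i - y ord0 i| < e) ->
  homothet Z (l0 + e) (y - (l0 + e) *: c) S`_j -> homothet Z l0 (y0 - l0 *: c) S`_j.
have [e e0 Pe] : exists2 e, 0 < e & forall j, P j e.
  apply: exists_small => j.
  have [inj|] := pselect (homothet Z l0 (y0 - l0 *: c) S`_j).
    by exists 1 => // e' _ _ y _ _.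
  move=> /(notin_homothet_near l0_ge0)[e e0 Pe].
  by exists e => // e' e'0 e'e y ye /(Pe e' e'0 e'e y ye).
exists e => // y ye; apply: sub_in_count => s sS /set_mem Hs; apply: mem_set.
have sS' : (index s S < size S)%N by rewrite index_mem.
by have := Pe (Ordinal sS') y ye; rewrite /= nth_index //; apply.
Qed.

(* Compactness: the infimum [l0] of the sizes of heavy homothets is attained,
   at a cluster point of the positions [y] of the heavy homothets of size
   [l0 + e], [e > 0]; [homothet_count_near] makes the count at [l0] heavy. *)
Lemma minimal_heavy_homothet S (th : R) : uniq S -> 1 < th ->
    (exists lam x, 0 < lam /\ th <= (homothet_count Z S lam x)%:R) ->
  exists lam x, [/\ 0 < lam, th <= (homothet_count Z S lam x)%:R &
    forall lam' x', 0 < lam' -> th <= (homothet_count Z S lam' x')%:R -> lam <= lam'].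
Proof.
move=> uS th1 [la [xa [la0 heavy_a]]].
pose L := [set lam | 0 < lam /\ exists x, th <= (homothet_count Z S lam x)%:R].
have La : L la by split=> //; exists xa.
have L_lb : lbound L 0 by move=> l [l0 _]; apply: ltW.
pose l0 := inf L; have l0_ge0 : 0 <= l0 by apply: lb_le_inf => //; exists la.
have l0_min lam x : 0 < lam -> th <= (homothet_count Z S lam x)%:R -> l0 <= lam.
  by move=> lam0 heavy; apply: ge_inf; [exists 0 | split=> //; exists x].
pose X e := [set y | th <= (homothet_count Z S (l0 + e) (y - (l0 + e) *: c))%:R].
have Xne e : 0 < e -> X e !=set0.
  move=> e0; have [l' [l'0 [x' heavy']] l'_lt] : exists2 l', L l' & l' < l0 + e.
    by apply: inf_lt; [exists la | lra].
  exists (x' + l' *: c); apply: le_trans heavy' _; rewrite ler_nat.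
  have := homothet_count_centered_le S (x' + l' *: c) (ltW l'0) (ltW l'_lt).
  by rewrite addrK; apply; lra.
have Xsub e e' : 0 < e' -> e' <= e -> X e' `<=` X e.
  move=> e'0 e'e y; rewrite /X /= => heavy; apply: le_trans heavy _.
  by rewrite ler_nat homothet_count_centered_le //; lra.
have [B cB X1B] : exists2 B, compact B & X 1 `<=` B.
  have [B cB heavyB] := homothet_count_gt0_compact S (addr_ge0 l0_ge0 ler01).
  exists B => // y heavy; apply: heavyB.
  by rewrite -(ltr0n R); apply: lt_le_trans heavy; lra.
have [y0 _ y0X] := nested_compact_cluster Xne Xsub cB X1B.
have heavy0 : th <= (homothet_count Z S l0 (y0 - l0 *: c))%:R.
  rewrite leNgt; apply/negP => light.
  have [e e0 near_le] := homothet_count_near S y0 l0_ge0.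
  have [y [Xy /= [_ y0y]]] := y0X e _ e0 (nbhsx_ballx y0 e e0).
  have := near_le y (fun i => y0y ord0 i); rewrite -(ler_nat R) => le_count.
  by move: Xy; rewrite /X /=; lra.
have l0_gt0 : 0 < l0.
  rewrite lt_neqAle l0_ge0 andbT; apply/eqP => l0_0; move: heavy0.
  have := homothet0_count_le1 Z (y0 - l0 *: c) uS; rewrite -l0_0 -(ler_nat R); lra.
by exists l0, (y0 - l0 *: c); split.
Qed.

End CenteredHomothets.

Section Greedy.
Variables (R : realType) (d : nat) (p : seq 'rV[R]_d) (i0 : 'I_(size p)).
Local Notation Z := (conv_hull p).
Hypothesis face_sym : forall u, centrally_symmetric (face p u).
Variable V : seq 'rV[R]_d.
Hypothesis V_vertices : forall x, x \in V <-> is_vertex Z x.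

Lemma size_vertices_gt0 : (0 < size V)%N.
Proof.
have [v /V_vertices] := vertex_exists i0 face_sym.
by rewrite lt0n size_eq0; apply: contraTneq => ->.
Qed.

Lemma greedy_hitting_set (th : R) : 1 < th -> forall n S, uniq S -> (size S <= n)%N ->
  exists W : seq 'rV[R]_d, (size W)%:R * th <= (size V * size S)%:R /\
    forall lam x, 0 < lam -> th <= (homothet_count Z S lam x)%:R ->
    exists2 w, w \in W & homothet Z lam x w.
Proof.
move=> th1; have [c Zc _] := conv_hull_center i0 face_sym.
elim=> [|n IH] S uS sizeS.
  exists [::]; rewrite mul0r ler0n; split=> // lam x _.
  by move: sizeS; rewrite leqn0 size_eq0 => /eqP->; rewrite /homothet_count /=; lra.
have [heavy|none] := pselect (exists lam x,
    0 < lam /\ th <= (homothet_count Z S lam x)%:R); last first.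
  by exists [::]; rewrite mul0r ler0n; split=> // lam x ? ?; case: none; exists lam, x.
have [ls [xs [ls0 heavy_s min_s]]] := minimal_heavy_homothet Zc i0 uS th1 heavy.
pose S' := [seq s <- S | s \notin homothet Z ls xs].
have sizeS' : (size S' + homothet_count Z S ls xs)%N = size S.
  by rewrite size_filter addnC count_predC.
have /IH[|W' [sizeW' hitW']] : (size S' <= n)%N.
- rewrite -ltnS (leq_trans _ sizeS) // -sizeS' -addn1 leq_add2l.
  by rewrite -(ltr0n R); lra.
- exact: filter_uniq.
exists ([seq ls *: v + xs | v <- V] ++ W'); split.
  rewrite size_cat size_map -sizeS' !natrM !natrD mulrDl.
  by move: sizeW' heavy_s; rewrite natrM; have := ler0n R (size V); nra.
move=> lam x lam0 heavy_x.
have [[s [sS xs_s s_s]]|disjoint] := pselect (exists s, [/\ s \in S,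
    homothet Z lam x s & homothet Z ls xs s]).
  have := homothet_meet_vertex i0 face_sym ls0 (min_s _ _ lam0 heavy_x) s_s xs_s.
  case=> v [Vv hit].
  exists (ls *: v + xs) => //; rewrite mem_cat; apply/orP; left.
  by apply: (map_f (fun v => ls *: v + xs)); apply/V_vertices.
have [w wW' hit] : exists2 w, w \in W' & homothet Z lam x w.
  apply: hitW' => //; apply: le_trans heavy_x _.
  rewrite ler_nat /homothet_count count_filter.
  apply: sub_in_count => s sS /set_mem xs_s; rewrite /= (mem_set xs_s) /=.
  by apply/negP => /set_mem s_s; apply: disjoint; exists s.
by exists w; rewrite // mem_cat wW' orbT.
Qed.

End Greedy.

Theorem mainTheorem20 (R : realType) (d : nat) (Z : set 'rV[R]_d)
  (V : seq 'rV[R]_d) :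
  is_zonotope Z ->
  uniq V -> (forall x, x \in V <-> is_vertex Z x) ->
  forall (S : seq 'rV[R]_d) (eps : R),
    uniq S -> S != [::] -> 0 < eps ->
    exists W : seq 'rV[R]_d,
      (size W)%:R <= (size V)%:R / eps /\
      forall (lam : R) (x : 'rV[R]_d), 0 < lam ->
        eps * (size S)%:R <= (count (fun s => s \in homothet Z lam x) S)%:R ->
        exists2 w, w \in W & homothet Z lam x w.
Proof.
move=> [[p [p_neq0 ->]] _ Zfaces] _ V_vertices S eps uS S_neq0 eps_gt0.
have i0 : 'I_(size p) by exists 0%N; rewrite lt0n size_eq0.
have face_sym u : centrally_symmetric (face p u) by apply: Zfaces; exists u.
have sizeS_gt0 : 0 < (size S)%:R :> R by rewrite ltr0n lt0n size_eq0.
have sizeV_ge1 : 1 <= (size V)%:R :> R.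
  by rewrite ler1n (size_vertices_gt0 i0 face_sym V_vertices).
have [small|big] := lerP (eps * (size S)%:R) 1.
  exists S; split; first by rewrite ler_pdivlMr //; lra.
  move=> lam x _ heavy; have : has (fun s => s \in homothet (conv_hull p) lam x) S.
    by rewrite has_count -(ltr_nat R); apply: lt_le_trans heavy; apply: mulr_gt0.
  by case/hasP=> s sS /set_mem; exists s.
have [W [sizeW hitW]] := greedy_hitting_set i0 face_sym V_vertices big uS (leqnn _).
exists W; split=> //; rewrite ler_pdivlMr // -(ler_pM2r sizeS_gt0) -mulrA.
by rewrite -natrM.
Qed.
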